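(* Let $n\geq 3$ and $R=K[x_1,\ldots,x_n]$ a polynomial ring over a field $K$. Then the ideal $L=(x_ix_{i+1}x_{i+2} : i=1,\ldots,n-2)\subset R$ (the path ideal of paths of length two in the path graph on $x_1,\ldots,x_n$) is normally torsion-free.
   Context: An ideal $I$ in $R$ is normally torsion-free if $\mathrm{Ass}(R/I^k)\subseteq\mathrm{Ass}(R/I)$ for all $k\geq 1$, where $\mathrm{Ass}$ denotes the set of associated primes. *)

From HB Require Import structures.
From mathcomp Require Import all_boot all_order all_algebra.
From mathcomp Require Import mpoly.
Set Implicit Arguments. Unset Strict Implicit. Unset Printing Implicit Defensive.
Import GRing.Theory.
Local Open Scope ring_scope.

Definition ideal_span (R : comNzRingType) (S : R -> Prop) : R -> Prop :=
  fun f => exists l : seq (R * R),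
    (forall p, p \in l -> S p.2) /\ f = \sum_(p <- l) p.1 * p.2.

Definition ideal_pow (R : comNzRingType) (I : R -> Prop) (k : nat) : R -> Prop :=
  ideal_span (fun x => exists s : seq R,
    size s = k /\ (forall a, a \in s -> I a) /\ x = \prod_(a <- s) a).

Definition is_ideal (R : comNzRingType) (P : R -> Prop) : Prop :=
  P 0 /\ (forall a b, P a -> P b -> P (a + b)) /\ (forall r a, P a -> P (r * a)).

Definition prime_ideal (R : comNzRingType) (P : R -> Prop) : Prop :=
  is_ideal P /\ ~ P 1 /\ (forall a b, P (a * b) -> P a \/ P b).

(* P is an associated prime of R/I: P is prime and P = (I : f) for some f in R. *)
Definition Ass (R : comNzRingType) (I : R -> Prop) (P : R -> Prop) : Prop :=
  prime_ideal P /\ exists f : R, forall g, P g <-> I (g * f).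

Definition normally_torsion_free (R : comNzRingType) (I : R -> Prop) : Prop :=
  forall k : nat, (1 <= k)%N -> forall P, Ass (ideal_pow I k) P -> Ass I P.

(* The path ideal of paths of length two on x_1,...,x_n (0-indexed here):
   generated by x_i x_{i+1} x_{i+2}. *)
Definition path2_ideal (K : fieldType) (n : nat) : {mpoly K[n]} -> Prop :=
  ideal_span (fun g => exists i j l : 'I_n,
    val j = (val i).+1 /\ val l = (val i).+2 /\ g = 'X_i * 'X_j * 'X_l).
Arguments path2_ideal K n : clear implicits.

(* For a set C of variables let cdeg_ge C d be the ideal of polynomials all of
   whose monomials have total degree >= d in the variables of C; it is the
   d-th power of the monomial prime P_C = cdeg_ge C 1, and it is P_C-primary.
   The proof has three steps.
   1. Packing/covering duality (path_pow_char): L^k is the intersection of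
      cdeg_ge C k over the vertex covers C of the triples.  The inclusion
      "contains" is the combinatorial heart: if every cover has weight >= k
      on a monomial x^m, a dynamic programme over the triples (D i = minimal
      weight of a cover of the first i triples) yields a packing of D (n-2)
      triples inside m, so x^m is a product of >= k generators.
   2. An associated prime P = (L^k : f) contains some (cdeg_ge C k : f) by
      prime avoidance; C may be shrunk to a minimal cover, and primaryness
      then forces P = P_C (prime_colon_cdeg).
   3. For a minimal cover C, P_C = (L : x^(outside C)) (minimal_cover_colon),
      so P_C is associated to L itself. *)

From mathcomp Require Import all_boot all_order all_algebra.
From mathcomp Require Import mpoly.
From Stdlib Require Import Classical.
From mathcomp Require Import ring zify.
Set Implicit Arguments. Unset Strict Implicit. Unset Printing Implicit Defensive.
Import GRing.Theory.
Local Open Scope ring_scope.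

Section Ideals.
Variable R : comNzRingType.

Lemma span_ideal (S : R -> Prop) : is_ideal (ideal_span S).
Proof.
split; first by exists [::]; rewrite big_nil.
split.
  move=> a b [la [Ha ->]] [lb [Hb ->]]; exists (la ++ lb); split.
    by move=> p; rewrite mem_cat => /orP[/Ha|/Hb].
  by rewrite big_cat.
move=> r a [l [Hl ->]]; exists [seq (r * p.1, p.2) | p <- l]; split.
  by move=> p /mapP [q /Hl Hq ->].
by rewrite big_map mulr_sumr; apply: eq_bigr => p _; rewrite mulrA.
Qed.

Lemma span_gen (S : R -> Prop) x : S x -> ideal_span S x.
Proof.
move=> Sx; exists [:: (1, x)]; split; first by move=> p; rewrite inE => /eqP ->.
by rewrite big_seq1 mul1r.
Qed.

Lemma span_least (S J : R -> Prop) : is_ideal J -> (forall x, S x -> J x) ->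
  forall x, ideal_span S x -> J x.
Proof.
move=> [J0 [JD JM]] SJ x [l [Hl ->]]; elim: l Hl => [|p l IH] Hl.
  by rewrite big_nil.
rewrite big_cons; apply: JD; first by apply/JM/SJ/Hl; rewrite inE eqxx.
by apply: IH => q Hq; apply: Hl; rewrite inE Hq orbT.
Qed.

Lemma ideal_sum (J : R -> Prop) (I : eqType) (r : seq I) (F : I -> R) :
  is_ideal J -> (forall i, i \in r -> J (F i)) -> J (\sum_(i <- r) F i).
Proof.
move=> [J0 [JD JM]]; elim: r => [|i r IH] H; first by rewrite big_nil.
rewrite big_cons; apply: JD; first by apply: H; rewrite inE eqxx.
by apply: IH => j Hj; apply: H; rewrite inE Hj orbT.
Qed.

Lemma ideal_mulr (J : R -> Prop) a r : is_ideal J -> J a -> J (a * r).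
Proof. by move=> [_ [_ JM]] Ja; rewrite mulrC; apply: JM. Qed.

Lemma ideal_sub (J : R -> Prop) a b : is_ideal J -> J a -> J b -> J (a - b).
Proof. by move=> [_ [JD JM]] Ja Jb; rewrite -mulN1r; apply/JD/JM. Qed.

Lemma colon_ideal (J : R -> Prop) f : is_ideal J -> is_ideal (fun g => J (g * f)).
Proof.
move=> [J0 [JD JM]]; split; first by rewrite mul0r.
by split=> [a b Ja Jb|r a Ja]; rewrite ?mulrDl -?mulrA; [apply: JD | apply: JM].
Qed.

Lemma prime_pow (P : R -> Prop) x k : prime_ideal P -> P (x ^+ k) -> P x.
Proof.
move=> [_ [P1 Pm]]; elim: k => [|k IH]; first by rewrite expr0.
by rewrite exprS => /Pm [//|/IH].
Qed.

Lemma pow_prod (I : R -> Prop) k (s : seq R) : (k <= size s)%N ->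
  (forall a, a \in s -> I a) -> ideal_pow I k (\prod_(a <- s) a).
Proof.
move=> ks Hs; rewrite -(cat_take_drop k s) big_cat /=.
apply: ideal_mulr; first exact: span_ideal.
apply: span_gen; exists (take k s); split; first by rewrite size_take_min; apply/minn_idPl.
by split=> // a /mem_take; apply: Hs.
Qed.

Lemma prime_avoid_inter (I : eqType) (s : seq I) (J : I -> R -> Prop)
    (P : R -> Prop) : prime_ideal P -> (forall i, is_ideal (J i)) ->
  (forall g, (forall i, i \in s -> J i g) -> P g) ->
  exists2 i, i \in s & forall g, J i g -> P g.
Proof.
move=> [_ [P1 Pmul]] Jid; elim: s => [|i s IH] Hs.
  by exfalso; apply/P1/Hs.
case: (classic (forall g, J i g -> P g)) => [Ji|]; first by exists i => //; rewrite mem_head.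
move=> /not_all_ex_not [a] /(imply_to_and (J i a)) [Ja nPa].
have [j js Jj] : exists2 j, j \in s & forall g, J j g -> P g.
  apply: IH => g Hg; have /Pmul[//|//] : P (a * g).
  apply: Hs => j; rewrite inE => /predU1P [->|js].
    exact: ideal_mulr (Jid i) Ja.
  by have [_ [_ JM]] := Jid j; apply/JM/Hg.
by exists j; rewrite // inE js orbT.
Qed.

End Ideals.

Lemma sum_window (f : nat -> nat) a b N : {homo f : x y / (x <= y)%N} ->
  (a <= b)%N -> (\sum_(0 <= t < N) (a <= t < b)%N * (f t.+1 - f t) <= f b - f a)%N.
Proof.
move=> fmono ab; pose clamp x := maxn a (minn x b).
have step t : ((a <= t < b)%N * (f t.+1 - f t) = f (clamp t.+1) - f (clamp t))%N.
  rewrite /clamp; case: (ltnP t a) => [lt_ta|ge_ta].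
    have -> : maxn a (minn t.+1 b) = a by lia.
    have -> : maxn a (minn t b) = a by lia.
    by rewrite subnn.
  case: (ltnP t b) => [lt_tb|ge_tb].
    have -> : maxn a (minn t.+1 b) = t.+1 by lia.
    have -> : maxn a t = t by lia.
    by rewrite /= mul1n.
  have -> : maxn a (minn t.+1 b) = b by lia.
  by rewrite (maxn_idPr ab) subnn.
under eq_bigr do rewrite step.
rewrite telescope_sumn; last by move=> x y xy; apply: fmono; rewrite /clamp; lia.
by apply: leq_sub; apply: fmono; rewrite /clamp; lia.
Qed.

Section Covers.
Variable n : nat.
Implicit Types (C S : {set 'I_n}) (j : 'I_n) (m : 'X_{1..n}).

Definition cdeg C m : nat := (\sum_(j in C) m j)%N.

Lemma cdegD C m1 m2 : cdeg C (m1 + m2)%MM = (cdeg C m1 + cdeg C m2)%N.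
Proof. by rewrite /cdeg -big_split; apply: eq_bigr => j _; rewrite mnmDE. Qed.

Lemma cdeg_subset C C' m : C' \subset C -> (cdeg C' m <= cdeg C m)%N.
Proof.
move=> /subsetP sub; apply: (sub_le_big leqnn (fun a b => leq_addr b a)) => j.
exact: sub.
Qed.

Lemma cdeg_mem j C m : j \in C -> (m j <= cdeg C m)%N.
Proof. by move=> jC; rewrite /cdeg (bigD1 j) //= leq_addr. Qed.

Lemma cdeg_setU1 j C m : (cdeg (j |: C) m <= cdeg C m + m j)%N.
Proof.
case: (boolP (j \in C)) => jC; last by rewrite /cdeg big_setU1 //= addnC.
by rewrite (setUidPr _) ?sub1set // leq_addr.
Qed.

Lemma cdeg_gt0 C m : (0 < cdeg C m)%N -> exists2 j, j \in C & (0 < m j)%N.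
Proof.
rewrite lt0n /cdeg sum_nat_eq0 negb_forall_in => /exists_inP [j jC mj].
by exists j; rewrite // lt0n.
Qed.

(* The generators of the path ideal are the monomials of the "triples"
   {t, t+1, t+2} with t < n - 2.  S covers the first i triples when it
   meets each triple {t, t+1, t+2} with t < i (and t < n - 2). *)
Definition covers (i : nat) S : bool :=
  [forall t : 'I_n, (t < minn i (n - 2))%N ==>
     [exists y in S, (t <= y <= t + 2)%N]].

Definition vertex_cover S : bool := covers (n - 2) S.

Lemma coversT i : covers i setT.
Proof.
apply/forallP => t; apply/implyP => _; apply/existsP; exists t.
by rewrite in_setT leqnn leq_addr.
Qed.

Lemma covers_mono i i' S : (i' <= i)%N -> covers i S -> covers i' S.
Proof.
move=> le /forallP cov; apply/forallP => t; apply/implyP => ti.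
by apply: (implyP (cov t)); lia.
Qed.

Definition triple (t : nat) : 'X_{1..n} :=
  [multinom ((t <= j) && (j <= t + 2))%N : nat | j < n].

Lemma triple_coord t j : triple t j = (j - 2 <= t < j.+1)%N.
Proof. by rewrite mnmE leq_subLR addnC ltnS andbC. Qed.

Variable m : 'X_{1..n}.

Definition min_cover (i : nat) : {set 'I_n} :=
  [arg min_(S < setT | covers i S) cdeg S m].
Definition D (i : nat) : nat := cdeg (min_cover i) m.

Lemma D_covers i : covers i (min_cover i).
Proof. by rewrite /min_cover; case: arg_minnP => //; exact: coversT. Qed.

Lemma D_min i S : covers i S -> (D i <= cdeg S m)%N.
Proof.
by rewrite /D /min_cover; case: arg_minnP => [|S0 _ H]; [exact: coversT|exact: H].
Qed.

Lemma D0 : D 0 = 0%N.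
Proof.
apply/eqP; rewrite -leqn0; apply: leq_trans (D_min (S := set0) _) _.
  by apply/forallP => t; rewrite min0n.
by rewrite /cdeg big_set0.
Qed.

Lemma D_mono : {homo D : a b / (a <= b)%N}.
Proof. by move=> a b ab; apply/D_min/(covers_mono ab (D_covers b)). Qed.

(* Adding j to an optimal cover of the triples before j - 2 covers all
   triples up to j, hence the key inequality of the dynamic programme. *)
Lemma D_step j : (D j.+1 <= D (j - 2) + m j)%N.
Proof.
apply: leq_trans (cdeg_setU1 j _ m); apply: D_min.
apply/forallP => t; apply/implyP => tj.
case: (ltnP t (minn (j - 2) (n - 2))) => tlo.
  have /existsP [y /andP [yS ty]] := implyP (forallP (D_covers (j - 2)) t) tlo.
  by apply/existsP; exists y; rewrite in_setU1 yS orbT.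
by apply/existsP; exists j; rewrite setU11 /=; lia.
Qed.

Definition pack (i : nat) : 'X_{1..n} :=
  (\big[+%MM/0%MM]_(0 <= t < i) (triple t *+ (D t.+1 - D t)))%MM.

(* Variable j is only used by the triples t with j - 2 <= t <= j, so its
   total use telescopes to at most D (j+1) - D (j-2) <= m j. *)
Lemma pack_le i : (pack i <= m)%MM.
Proof.
apply/mnm_lepP => j; rewrite mnm_sumE.
under eq_bigr => t _ do rewrite mulmnE triple_coord.
apply: leq_trans (sum_window i D_mono (leq_trans (leq_subr 2 j) (leqnSn j))) _.
by rewrite leq_subLR D_step.
Qed.

End Covers.

Section DegreeIdeals.
Variables (K : fieldType) (n : nat).
Local Notation R := {mpoly K[n]}.
Implicit Types (C : {set 'I_n}) (j : 'I_n) (m : 'X_{1..n}) (f g h : R).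

(* cdeg_ge C d h: every monomial of h has C-degree at least d.  For d >= 1
   this is the d-th power of the monomial prime generated by the variables
   in C; cdeg_ge C 1 is that prime itself. *)
Definition cdeg_ge C (d : nat) h : Prop :=
  forall m, h@_m != 0 -> (d <= cdeg C m)%N.

Lemma cdeg_ge0 C h : cdeg_ge C 0 h.
Proof. by []. Qed.

Lemma cdeg_ge_le C a b h : (a <= b)%N -> cdeg_ge C b h -> cdeg_ge C a h.
Proof. by move=> ab H m /H; apply: leq_trans. Qed.

Lemma cdeg_ge_subset C C' d h : C' \subset C -> cdeg_ge C' d h -> cdeg_ge C d h.
Proof. by move=> sub H m /H dm; apply: leq_trans dm (cdeg_subset _ sub). Qed.

Lemma cdeg_geM C a b g h :
  cdeg_ge C a g -> cdeg_ge C b h -> cdeg_ge C (a + b) (g * h).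
Proof.
move=> Hg Hh m; rewrite -mcoeff_msupp => /msuppM_le /allpairsP [[m1 m2] /= [H1 H2 ->]].
by rewrite cdegD leq_add //; [apply: Hg | apply: Hh]; rewrite -mcoeff_msupp.
Qed.

Lemma cdeg_ge_ideal C d : is_ideal (cdeg_ge C d).
Proof.
split; first by move=> m; rewrite mcoeff0 eqxx.
split; last by move=> r a Ha; rewrite -[d]add0n; apply: cdeg_geM.
move=> a b Ha Hb m; rewrite mcoeffD => H.
have [a0|/Ha //] := eqVneq a@_m 0; by rewrite a0 add0r in H; apply: Hb.
Qed.

Lemma cdeg_geX C d m : (d <= cdeg C m)%N -> cdeg_ge C d 'X_[m].
Proof. by move=> dm m'; rewrite mcoeffX; case: (eqVneq m m') => [<-|]; rewrite ?eqxx. Qed.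

Lemma cdeg_ge_var C j k : j \in C -> cdeg_ge C k ('X_j ^+ k).
Proof.
move=> jC; rewrite mpolyXn; apply: cdeg_geX; apply: leq_trans (cdeg_mem _ jC).
by rewrite mulmnE mnm1E eqxx mul1n.
Qed.

Lemma monomial_crit (J : R -> Prop) h : is_ideal J ->
  (forall m, h@_m != 0 -> J 'X_[m]) -> J h.
Proof.
move=> [J0 [JD JM]] H; rewrite (mpolyE h); apply: ideal_sum => // m.
by rewrite mcoeff_msupp -mul_mpolyC => /H; apply: JM.
Qed.

Definition hpart C (d : nat) h : R :=
  \sum_(m <- msupp h | cdeg C m == d) h@_m *: 'X_[m].

Lemma hpart_coef C d h m :
  (hpart C d h)@_m = if cdeg C m == d then h@_m else 0.
Proof.
have Eh : h@_m = \sum_(m' <- msupp h) h@_m' * (m' == m)%:R.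
  by rewrite {1}(mpolyE h) raddf_sum /=; apply: eq_bigr => m' _; rewrite mcoeffZ mcoeffX.
rewrite /hpart raddf_sum /= big_mkcond Eh.
have -> : (if cdeg C m == d then \sum_(m' <- msupp h) h@_m' * (m' == m)%:R else 0)
    = \sum_(m' <- msupp h) (if cdeg C m == d then h@_m' * (m' == m)%:R else 0).
  by case: ifP => _ //; rewrite big1.
apply: eq_bigr => m' _; case: (eqVneq m' m) => [->|ne];
  by rewrite mcoeffZ mcoeffX ?eqxx ?(negbTE ne) ?mulr0 ?if_same.
Qed.

Lemma hpart_supp C d h m : (hpart C d h)@_m != 0 -> cdeg C m = d.
Proof. by rewrite hpart_coef; case: (cdeg C m =P d); rewrite ?eqxx. Qed.

Lemma hpart_neq0 C h m : h@_m != 0 -> hpart C (cdeg C m) h != 0.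
Proof.
by apply: contraNneq => /(congr1 (mcoeff m)); rewrite hpart_coef eqxx mcoeff0 => ->.
Qed.

Lemma cdeg_ge_hpart C d h : cdeg_ge C d h -> cdeg_ge C d.+1 (h - hpart C d h).
Proof.
move=> Hh m; rewrite mcoeffB hpart_coef.
case: (eqVneq (cdeg C m) d) => [_|ne]; first by rewrite subrr eqxx.
by rewrite subr0 => /Hh; rewrite leq_eqVlt eq_sym (negbTE ne).
Qed.

Lemma cdeg_ge_witness C d h :
  ~ cdeg_ge C d.+1 h -> exists2 m, h@_m != 0 & (cdeg C m <= d)%N.
Proof.
move=> nH; apply: NNPP => nex; apply: nH => m hm; rewrite ltnNge.
by apply/negP => le; apply: nex; exists m.
Qed.

(* C-orders add up when g has C-order 0: the lowest C-degree parts of g and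
   f multiply to a nonzero polynomial of C-degree exactly d, which would
   otherwise lie in cdeg_ge C d.+1. *)
Lemma cdeg_order_mul C d g f : ~ cdeg_ge C 1 g ->
  cdeg_ge C d f -> ~ cdeg_ge C d.+1 f -> ~ cdeg_ge C d.+1 (g * f).
Proof.
move=> /cdeg_ge_witness [mg gmg]; rewrite leqn0 => /eqP dg Hf.
move=> /cdeg_ge_witness [mf fmf] df; have {}df : cdeg C mf = d.
  by apply/eqP; rewrite eqn_leq df Hf.
set g0 := hpart C 0 g; set f0 := hpart C d f.
have nz : g0 * f0 != 0.
  by rewrite mulf_neq0 // /g0 /f0 -?dg -?df; apply: hpart_neq0.
have exact_deg : forall m, (g0 * f0)@_m != 0 -> cdeg C m = d.
  move=> m; rewrite -mcoeff_msupp => /msuppM_le /allpairsP [[m1 m2] /= [H1 H2 ->]].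
  by move: H1 H2; rewrite !mcoeff_msupp cdegD => /hpart_supp -> /hpart_supp ->.
have lead_nz : (g0 * f0)@_(mlead (g0 * f0)) != 0 by rewrite -mcoeff_msupp mlead_supp.
move=> Hgf; suff /(_ _ lead_nz) : cdeg_ge C d.+1 (g0 * f0) by rewrite exact_deg // ltnn.
have -> : g0 * f0 = g * f - g0 * (f - f0) - (g - g0) * f by ring.
have J := cdeg_ge_ideal C d.+1.
apply: (ideal_sub J); first apply: (ideal_sub J Hgf).
  by rewrite -[d.+1]add0n; apply: cdeg_geM (cdeg_ge_hpart Hf).
by rewrite -add1n; apply: cdeg_geM (cdeg_ge_hpart (@cdeg_ge0 C g)) Hf.
Qed.

Lemma cdeg_ge_primary C k g f :
  ~ cdeg_ge C 1 g -> cdeg_ge C k (g * f) -> cdeg_ge C k f.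
Proof.
move=> ng Hgf; suff : forall d, (d <= k)%N -> cdeg_ge C d f by apply.
elim=> [|d IH] dk; first exact: cdeg_ge0.
have Hd := IH (ltnW dk); apply: NNPP => nHd.
exact: (cdeg_order_mul ng Hd nHd) (cdeg_ge_le dk Hgf).
Qed.

Lemma prime_colon_cdeg C k f (P : R -> Prop) : prime_ideal P ->
  (forall g, P g <-> cdeg_ge C k (g * f)) -> forall g, P g <-> cdeg_ge C 1 g.
Proof.
move=> Pprime HP g; have [Pid [P1 _]] := Pprime; split.
  move/HP => Hgf; apply: NNPP => ng; apply/P1/HP; rewrite mul1r.
  exact: cdeg_ge_primary ng Hgf.
move=> Hg; apply: monomial_crit => // m /Hg /cdeg_gt0 [j jC mj].
have Pj : P 'X_j.
  apply: (prime_pow Pprime (k := k)); apply/HP.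
  exact: ideal_mulr (cdeg_ge_ideal C k) (@cdeg_ge_var C j k jC).
have -> : m = (m - U_(j) + U_(j))%MM.
  by rewrite submK //; apply/mnm_lepP => x; rewrite mnm1E; case: eqP => // <-.
by rewrite mpolyXD; have [_ [_ PM]] := Pid; apply: PM.
Qed.

End DegreeIdeals.
Arguments cdeg_ge_ideal {K n} C d.

Section PathIdeal.
Variables (K : fieldType) (n : nat).
Local Notation R := {mpoly K[n]}.
Local Notation L := (path2_ideal K n).
Implicit Types (C : {set 'I_n}) (m : 'X_{1..n}) (h : R).

Lemma triple_gen t : (t < n - 2)%N -> L 'X_[triple n t].
Proof.
move=> tn; apply: span_gen.
have t0 : (t < n)%N by lia.
have t1 : (t.+1 < n)%N by lia.
have t2 : (t.+2 < n)%N by lia.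
exists (Ordinal t0), (Ordinal t1), (Ordinal t2); do 2!split => //.
rewrite -!mpolyXD; congr 'X_[_]; apply/mnmP => j.
rewrite !mnmDE !mnm1E triple_coord -!val_eqE /=.
case: (boolP (j - 2 <= t)%N); case: (boolP (t < j.+1)%N);
  case: (eqVneq t j); case: (eqVneq t.+1 j); case: (eqVneq t.+2 j) => /=; lia.
Qed.

Lemma path_ideal_cover C h : vertex_cover C -> L h -> cdeg_ge C 1 h.
Proof.
move=> cC; apply: span_least; first exact: cdeg_ge_ideal.
move=> _ [i [j [l [/= ej [/= el ->]]]]]; rewrite -!mpolyXD; apply: cdeg_geX.
have iN : (i < minn (n - 2) (n - 2))%N by rewrite minnn; have := ltn_ord l; lia.
have /existsP [y /andP [yC iy]] := implyP (forallP cC i) iN.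
apply: leq_trans (cdeg_mem _ yC); rewrite !mnmDE !mnm1E -!val_eqE /= ej el.
by case: (eqVneq (i : nat) y); case: (eqVneq (i : nat).+1 y);
  case: (eqVneq (i : nat).+2 y) => /=; lia.
Qed.

Lemma path_pow_cover C k h : vertex_cover C -> ideal_pow L k h -> cdeg_ge C k h.
Proof.
move=> cC; apply: span_least; first exact: cdeg_ge_ideal.
move=> _ [s [<- [Hs ->]]]; elim: s Hs => [|a s IH] Hs; first exact: cdeg_ge0.
rewrite big_cons /= -add1n; apply: cdeg_geM; first by apply/path_ideal_cover/Hs/mem_head.
by apply: IH => b sb; apply: Hs; rewrite inE sb orbT.
Qed.

Lemma pack_prod m i : (i <= n - 2)%N -> exists s : seq R, [/\ size s = D m i,
  forall a, a \in s -> L a & 'X_[pack m i] = \prod_(a <- s) a].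
Proof.
elim: i => [|i IH] iN.
  by exists [::]; rewrite D0 big_nil /pack big_geq // mpolyX0.
have [s [sz Hs E]] := IH (ltnW iN).
exists (s ++ nseq (D m i.+1 - D m i) 'X_[triple n i]); split.
- by rewrite size_cat size_nseq sz subnKC // D_mono.
- move=> a; rewrite mem_cat => /orP [/Hs //|]; rewrite mem_nseq => /andP [_ /eqP ->].
  exact: triple_gen.
have prod_nseq (x : R) k : \prod_(a <- nseq k x) a = x ^+ k.
  by rewrite big_nseq -Monoid.iteropE.
by rewrite /pack big_nat_recr //= mpolyXD -/(pack m i) E big_cat /= prod_nseq mpolyXn.
Qed.

(* Duality: a monomial whose weight on every vertex cover is at least k is
   divisible by the packing monomial, a product of at least k generators. *)
Lemma monomial_in_pow m k : (forall C, vertex_cover C -> (k <= cdeg C m)%N) ->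
  ideal_pow L k 'X_[m].
Proof.
move=> Hm; have [s [sz Hs E]] := pack_prod m (leqnn (n - 2)).
rewrite -(submK (pack_le m (n - 2))) mpolyXD E mulrC.
apply: ideal_mulr; first exact: span_ideal.
by apply: pow_prod Hs; rewrite sz; apply/Hm/D_covers.
Qed.

(* L^k is the intersection of the k-th powers of the primes of the vertex
   covers; in particular L^k equals its k-th symbolic power. *)
Lemma path_pow_char k h :
  ideal_pow L k h <-> forall C, vertex_cover C -> cdeg_ge C k h.
Proof.
split=> [Hh C cC|H]; first exact: path_pow_cover.
apply: monomial_crit => [|m hm]; first exact: span_ideal.
by apply: monomial_in_pow => C cC; apply: H.
Qed.

Lemma path_ideal_char h : L h <-> forall C, vertex_cover C -> cdeg_ge C 1 h.
Proof.
split=> [Hh C cC|/path_pow_char]; first exact: path_ideal_cover.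
apply: span_least; first exact: span_ideal.
by move=> _ [[|a [|b s]] [//= _ [Hs ->]]]; rewrite big_seq1; apply/Hs/mem_head.
Qed.

Definition outside C : 'X_{1..n} := [multinom (j \notin C : nat) | j < n].

Lemma cdeg_outside C : cdeg C (outside C) = 0%N.
Proof. by rewrite /cdeg big1 // => j jC; rewrite mnmE jC. Qed.

Lemma minimal_cover_colon C : minset (@vertex_cover n) C ->
  forall h, cdeg_ge C 1 h <-> L (h * 'X_[outside C]).
Proof.
move=> minC h; split=> [Hh|/(path_ideal_cover (minsetp minC)) Hhx m hm].
  apply/path_ideal_char => C' cC'.
  case: (boolP (C' \subset C)) => [sub|/subsetPn [j jC' jC]].
    by rewrite (minsetinf minC cC' sub); exact: ideal_mulr (cdeg_ge_ideal C 1) Hh.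
  rewrite mulrC; apply: ideal_mulr (cdeg_ge_ideal C' 1) _; apply: cdeg_geX.
  by apply: leq_trans (cdeg_mem _ jC'); rewrite mnmE jC.
by have := Hhx (outside C + m)%MM; rewrite mcoeffMX cdegD cdeg_outside; apply.
Qed.

End PathIdeal.

Theorem corollary2p4 (K : fieldType) (n : nat) (hn : (3 <= n)%N) :
  normally_torsion_free (path2_ideal K n).
Proof.
move=> k _ P [Pprime [f Hf]].
pose covers_seq := [seq C <- enum {set 'I_n} | vertex_cover C].
have [C0] : exists2 C0, C0 \in covers_seq & forall g, cdeg_ge C0 k (g * f) -> P g.
  apply: prime_avoid_inter Pprime _ _ => [C|g Hg]; first exact/colon_ideal/cdeg_ge_ideal.
  by apply/Hf/path_pow_char => C cC; apply: Hg; rewrite mem_filter cC mem_enum.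
rewrite mem_filter => /andP [C0cov _] C0P.
have [C minC subC0] := minset_exists C0cov.
have PC : forall g, P g <-> cdeg_ge C 1 g.
  apply: (prime_colon_cdeg Pprime) => g.
  split=> [/Hf/path_pow_char|/(cdeg_ge_subset subC0)/C0P //].
  by apply; exact: minsetp minC.
split=> //; exists 'X_[outside C] => g; rewrite PC; exact: minimal_cover_colon.
Qed.
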